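(* Let $p$ be an odd prime, let $v$ be an integer with $1<v<p-1$, let $g\in\{2,\dots,p-1\}$ be a primitive root modulo $p$, and let $t\ge 1$. For $z=(z(0),\dots,z(t-1))\in\{0,\dots,v-1\}^t$ let $$\lambda(z)=\#\{x\in\{0,1,\dots,p-2\}:\ (g^{x+\iota}\,\%\,p)\,\%\,v=z(\iota)\text{ for all }0\le\iota<t\}.$$ Write $p=q\,g^{t-1}+r$ with integers $q\ge 0$ and $0\le r<g^{t-1}$. Then for every $z\in\{0,\dots,v-1\}^t$, $$\left\lfloor \frac{g}{v}\right\rfloor^{t-1}\left\lfloor\frac{q}{v}\right\rfloor\ \le\ \lambda(z)\ \le\ \left\lceil\frac{g}{v}\right\rceil^{t-1}\left(\left\lfloor\frac{q}{v}\right\rfloor+1\right).$$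
   Context: For integers $x$ and $m\ge1$, $x\,\%\,m$ denotes the least nonnegative remainder of $x$ modulo $m$. Thus $\lambda(z)$ is the number of (cyclic) occurrences of the tuple $z$ in the periodic sequence $\big((g^{i}\,\%\,p)\,\%\,v\big)_{i}$ of period $p-1$. *)

From mathcomp Require Import all_boot.
Set Implicit Arguments. Unset Strict Implicit. Unset Printing Implicit Defensive.

Definition primitive_root_mod (p g : nat) : Prop :=
  coprime g p /\ g ^ (p - 1) %% p = 1 %% p /\
  forall k, 0 < k < p - 1 -> g ^ k %% p != 1.

Definition lambda (p v g t : nat) (z : 'I_t -> 'I_v) : nat :=
  #|[set x : 'I_(p - 1) | [forall i : 'I_t, (g ^ (x + i) %% p) %% v == z i]]|.

Definition ceil_div (a d : nat) : nat := (a + d - 1) %/ d.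
Arguments lambda : clear implicits.

From mathcomp Require Import all_boot zify.
Set Implicit Arguments. Unset Strict Implicit. Unset Printing Implicit Defensive.

(* Writing y = g^x mod p, lambda(z) counts the nonzero residues y < p whose
   orbit y_i = g^i y mod p satisfies y_i = z(i) (mod v) for i < t.  Passing from
   y_i to y_(i+1) = g y_i - p d_i produces a carry d_i < g, and d_0, ..., d_(t-2)
   are the base-g digits, most significant first, of K = floor(g^(t-1) y / p).
   Once y = z(0) (mod v), the orbit condition is therefore a congruence condition
   on each digit of K separately; as p is invertible mod v, each such condition
   is met by between floor(g/v) and ceil(g/v) digits.  The y with a given K form
   an interval of q or q + 1 integers, q = floor(p / g^(t-1)), containing
   between floor(q/v) and floor(q/v) + 1 elements of the class of z(0) mod v. *)


Lemma leq_sum_nat_subinterval a1 a2 b2 b1 (F : nat -> nat) :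
  a1 <= a2 -> b2 <= b1 -> \sum_(a2 <= i < b2) F i <= \sum_(a1 <= i < b1) F i.
Proof.
move=> le_a le_b; rewrite (big_nat_widen _ _ _ _ _ le_b) (big_nat_widenl _ _ _ _ _ le_a).
by rewrite big_mkcond /=; apply: leq_sum => i _; case: ifP.
Qed.

Lemma leq_ceil_div a d y : 0 < d -> (ceil_div a d <= y) = (a <= d * y).
Proof. by move=> d_gt0; rewrite /ceil_div; apply/idP/idP; nia. Qed.

Lemma leq_ceil_div_mul m d : 0 < d -> m <= ceil_div m d * d.
Proof. by move=> d_gt0; rewrite mulnC -leq_ceil_div. Qed.

Section Periodic.

Variables (v : nat) (Q : pred nat).
Hypotheses (v_gt0 : 0 < v) (Q_periodic : forall y, Q (y + v) = Q y)
  (Q_once : \sum_(0 <= y < v) Q y = 1).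

Lemma sum_periodic_window a : \sum_(a <= y < a + v) Q y = 1.
Proof.
elim: a => [|a IHa]; first by rewrite add0n.
have := @big_nat_recr _ 0 addn (a + v) a (fun y => Q y : nat) (leq_addr v a).
rewrite /= IHa [1 + _]addnC Q_periodic big_ltn ?ltnS ?leq_addr // -addSn => /eqP.
by rewrite eqn_add2l => /eqP.
Qed.

Lemma sum_periodic_blocks a k : \sum_(a <= y < a + k * v) Q y = k.
Proof.
elim: k => [|k IHk]; first by rewrite mul0n addn0 big_geq.
rewrite mulSnr addnA (big_cat_nat _ (n := a + k * v)) ?leq_addr //=.
by rewrite IHk sum_periodic_window addn1.
Qed.

Lemma sum_periodic_bounds a m :
  m %/ v <= \sum_(a <= y < a + m) Q y <= ceil_div m v.
Proof.
apply/andP; split.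
  rewrite -[X in X <= _](sum_periodic_blocks a).
  by apply: leq_sum_nat_subinterval; rewrite // leq_add2l leq_divM.
rewrite -[X in _ <= X](sum_periodic_blocks a).
by apply: leq_sum_nat_subinterval; rewrite // leq_add2l leq_ceil_div_mul.
Qed.

End Periodic.

Lemma eqn_modMl_coprime k m n d :
  coprime k d -> (k * m == k * n %[mod d]) = (m == n %[mod d]).
Proof.
wlog le_nm : m n / n <= m.
  move=> W co_kd; case: (leqP n m) => [|/ltnW] le; first exact: W.
  by rewrite [LHS]eq_sym W // eq_sym.
move=> co_kd; rewrite !eqn_mod_dvd ?leq_mul2l ?le_nm ?orbT // -mulnBr.
by rewrite Gauss_dvdr // coprime_sym.
Qed.

Lemma sum_affine_residue v p e c : coprime p v -> c < v ->
  \sum_(0 <= d < v) (e + p * d == c %[mod v]) = 1.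
Proof.
move=> co_pv lt_cv; have v_gt0 : 0 < v by apply: leq_ltn_trans lt_cv.
pose f (d : 'I_v) : 'I_v := Ordinal (ltn_pmod (e + p * d) v_gt0).
have f_inj : injective f.
  move=> d1 d2 /(congr1 val) /eqP /=.
  by rewrite eqn_modDl eqn_modMl_coprime // !modn_small // => /eqP /val_inj.
rewrite big_mkord -[1](cards1 (Ordinal lt_cv)) -(card_preimset _ f_inj) -sum1_card.
rewrite [RHS]big_mkcond; apply: eq_bigr => d _.
by rewrite !inE -val_eqE /= (modn_small lt_cv); case: eqP.
Qed.

Lemma sum_affine_residue_bounds v p e c a m : coprime p v -> c < v ->
  m %/ v <= \sum_(a <= d < a + m) (e + p * d == c %[mod v]) <= ceil_div m v.
Proof.
move=> co_pv lt_cv; apply: sum_periodic_bounds.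
- exact: leq_ltn_trans lt_cv.
- by move=> d; rewrite mulnDr [p * d + _]addnC addnCA modnMDl.
- exact: sum_affine_residue.
Qed.

Definition digitwise (g n : nat) (A : nat -> pred nat) (K : nat) : bool :=
  all (fun j => A j (K %/ g ^ j %% g)) (iota 0 n).

Lemma digitwiseS g n A K :
  digitwise g n.+1 A K = A 0 (K %% g) && digitwise g n (fun j => A j.+1) (K %/ g).
Proof.
rewrite /digitwise /= expn0 divn1 -add1n iotaDl all_map; congr (_ && _).
by apply: eq_all => j /=; rewrite add1n expnS divnMA.
Qed.

Lemma sum_nat_mul_split m g (F : nat -> nat) :
  \sum_(0 <= K < m * g) F K = \sum_(0 <= K < m) \sum_(0 <= d < g) F (K * g + d).
Proof.
elim: m => [|m IHm]; first by rewrite mul0n !big_geq.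
rewrite big_nat_recr //= mulSnr (big_cat_nat _ (n := m * g)) ?leq_addr //= IHm.
rewrite -{1}[m * g]add0n big_addn addKn; congr (_ + _).
by apply: eq_big_nat => d _; rewrite addnC.
Qed.

Lemma sum_digitwise g n (A : nat -> pred nat) : 0 < g ->
  \sum_(0 <= K < g ^ n) digitwise g n A K = \prod_(0 <= j < n) \sum_(0 <= d < g) A j d.
Proof.
move=> g_gt0; elim: n A => [|n IHn] A; first by rewrite big_nat1 big_geq.
rewrite expnSr sum_nat_mul_split big_nat_recl //= -IHn big_distrr /=.
apply: eq_bigr => K _; rewrite big_distrl /=; apply: eq_big_nat => d /andP[_ lt_dg].
rewrite digitwiseS modnMDl divnMDl // (modn_small lt_dg) (divn_small lt_dg) addn0.
by case: (A 0 d); rewrite ?mul1n ?mul0n.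
Qed.

Lemma sum_digitwise_weighted_bounds g n (A : nat -> pred nat) (F : nat -> nat) a b lo hi :
  0 < g ->
  (forall j, a <= \sum_(0 <= d < g) A j d <= b) ->
  (forall K, K < g ^ n -> lo <= F K <= hi) ->
  a ^ n * lo <= \sum_(0 <= K < g ^ n) digitwise g n A K * F K <= b ^ n * hi.
Proof.
move=> g_gt0 bound_A bound_F.
have bound_digits : a ^ n <= \sum_(0 <= K < g ^ n) digitwise g n A K <= b ^ n.
  have prod_const c : c ^ n = \prod_(0 <= j < n) c by rewrite prod_nat_const_nat subn0.
  rewrite sum_digitwise // !prod_const.
  by apply/andP; split; apply: leq_prod => j _; case/andP: (bound_A j).
case/andP: bound_digits => ge_a le_b; apply/andP; split.
  apply: leq_trans (leq_mul ge_a (leqnn lo)) _.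
  rewrite big_distrl /= big_nat_cond [X in _ <= X]big_nat_cond.
  apply: leq_sum => K; rewrite andbT => /andP[_ /bound_F].
  by case/andP=> ge_lo _; rewrite leq_mul2l ge_lo orbT.
apply: leq_trans (leq_mul le_b (leqnn hi)).
rewrite big_distrl /= big_nat_cond [X in _ <= X]big_nat_cond.
apply: leq_sum => K; rewrite andbT => /andP[_ /bound_F].
by case/andP=> _ le_hi; rewrite leq_mul2l le_hi orbT.
Qed.

Lemma mul_modn_carry g x p : 0 < p ->
  g * (x %% p) = g * x %% p + p * (g * x %/ p %% g).
Proof.
move=> p_gt0.
have quot : g * x %/ p = x %/ p * g + g * (x %% p) %/ p.
  by rewrite {1}(divn_eq x p) mulnDr mulnA divnMDl // [g * _]mulnC.
have [-> | g_gt0] := posnP g; first by rewrite !mul0n mod0n div0n muln0.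
have small : g * (x %% p) %/ p < g by rewrite ltn_divLR // ltn_pmul2l ?ltn_pmod.
by rewrite quot modnMDl (modn_small small) -modnMmr [p * _]mulnC addnC -divn_eq.
Qed.

Lemma divn_expn_mul g n i y p : 0 < g -> i <= n ->
  g ^ i * y %/ p = g ^ n * y %/ p %/ g ^ (n - i).
Proof.
move=> g_gt0 le_in; rewrite -divnMA -[LHS](@divnMl (g ^ (n - i))) ?expn_gt0 ?g_gt0 //.
by rewrite mulnA -expnD subnK // [_ * p]mulnC.
Qed.

Lemma all_iota_stepwise n (A B : pred nat) :
  (forall i, i < n -> A i -> A i.+1 = B i) ->
  all A (iota 0 n.+1) = A 0 && all B (iota 0 n).
Proof.
move=> step; apply/allP/andP => [allA | [A0 /allP allB] i].
  split; first by apply: allA; rewrite mem_iota.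
  apply/allP => i; rewrite mem_iota add0n => /andP[_ lt_in].
  by rewrite -step // allA // mem_iota; apply/andP; split => //; apply: ltnW.
rewrite mem_iota add0n => /andP[_]; elim: i => // i IHi lt_in.
by rewrite step ?allB ?mem_iota ?IHi // ltnW.
Qed.

Lemma all_iota_rev n (P : pred nat) :
  all (fun i => P (n.-1 - i)) (iota 0 n) = all P (iota 0 n).
Proof.
apply/allP/allP => all_P i; rewrite mem_iota add0n => /andP[_ lt_in].
  by have := all_P (n.-1 - i); rewrite subKn; [apply; rewrite mem_iota | ]; lia.
by apply: all_P; rewrite mem_iota; lia.
Qed.

Definition carry_ok (p v g : nat) (zz : nat -> nat) (i d : nat) : bool :=
  zz i.+1 + p * d == g * zz i %[mod v].

Section Orbit.

Variables (p v g n : nat) (zz : nat -> nat).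
Hypotheses (p_gt0 : 0 < p) (g_gt0 : 0 < g) (zz_lt : forall i, zz i < v).

Lemma orbit_residue_step y i : i < n -> g ^ i * y %% p %% v == zz i ->
  (g ^ i.+1 * y %% p %% v == zz i.+1) =
  carry_ok p v g zz i (g ^ n * y %/ p %/ g ^ (n.-1 - i) %% g).
Proof.
move=> lt_in /eqP res_i.
have carry := mul_modn_carry g (g ^ i * y) p_gt0.
have -> : n.-1 - i = n - i.+1 by lia.
rewrite mulnA -expnS (divn_expn_mul _ _ g_gt0 lt_in) in carry.
by rewrite /carry_ok -res_i modnMmr carry eqn_modDr (modn_small (zz_lt _)) eq_sym.
Qed.

Lemma orbit_residues_digitwise y : y < p ->
  all (fun i => g ^ i * y %% p %% v == zz i) (iota 0 n.+1) =
  (y %% v == zz 0) && digitwise g n (fun j => carry_ok p v g zz (n.-1 - j)) (g ^ n * y %/ p).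
Proof.
move=> lt_yp; rewrite (all_iota_stepwise (orbit_residue_step (y := y))).
rewrite expn0 mul1n (modn_small lt_yp); congr (_ && _).
rewrite /digitwise -all_iota_rev; apply: eq_in_all => i; rewrite mem_iota add0n => /andP[_ lt_in].
by rewrite /= subKn // -ltnS prednK // (leq_ltn_trans _ lt_in).
Qed.

End Orbit.

Lemma sum_nat_intervals (lo : nat -> nat) (F : nat -> nat) N :
  lo 0 = 0 -> (forall k, lo k <= lo k.+1) ->
  \sum_(0 <= y < lo N) F y = \sum_(0 <= K < N) \sum_(lo K <= y < lo K.+1) F y.
Proof.
move=> lo0 lo_mono; elim: N => [|N IHN]; first by rewrite lo0 !big_geq.
by rewrite big_nat_recr //= -IHN -big_cat_nat.
Qed.

Lemma ceil_div_interval p G K y : 0 < p -> 0 < G ->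
  (ceil_div (K * p) G <= y < ceil_div (K.+1 * p) G) = (G * y %/ p == K).
Proof.
move=> p_gt0 G_gt0; rewrite leq_ceil_div // ltnNge leq_ceil_div // -ltnNge.
by rewrite eqn_leq -[G * y %/ p <= K]ltnS ltn_divLR // leq_divRL // andbC.
Qed.

Lemma ceil_div_addn_le a b d : 0 < d -> ceil_div (a + b) d <= ceil_div a d + b %/ d + 1.
Proof. by move=> d_gt0; rewrite /ceil_div; nia. Qed.

Lemma ceil_div_addn_ge a b d : 0 < d -> 0 < b ->
  maxn (ceil_div a d) 1 + (b - 1) %/ d <= ceil_div (a + b) d.
Proof. by move=> d_gt0 b_gt0; rewrite /ceil_div; nia. Qed.

Lemma sum_nonzero_residue_interval p G v r K : 0 < G -> r < v -> ~~ (v %| p) ->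
  p %/ G %/ v
    <= \sum_(ceil_div (K * p) G <= y < ceil_div (K.+1 * p) G) ((y != 0) && (y %% v == r))
    <= p %/ G %/ v + 1.
Proof.
move=> G_gt0 lt_rv ndvd_vp.
have v_gt0 : 0 < v by apply: leq_ltn_trans lt_rv.
have p_gt0 : 0 < p by case: p ndvd_vp; rewrite ?dvdn0.
have residue_bounds a m :
    m %/ v <= \sum_(a <= y < a + m) (y %% v == r) <= ceil_div m v.
  have := sum_affine_residue_bounds 0 a m (coprime1n v) lt_rv.
  by under eq_bigr do rewrite add0n mul1n (modn_small lt_rv).
set lo := ceil_div (K * p) G; set hi := ceil_div (K.+1 * p) G.
have len_le : hi <= lo + (p %/ G + 1) by rewrite addnA /hi mulSnr ceil_div_addn_le.
have len_ge : maxn lo 1 + (p - 1) %/ G <= hi by rewrite /hi mulSnr ceil_div_addn_ge.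
apply/andP; split.
  (* [(p-1)/G] nonzero points lie in every interval, and
     floor((p-1)/(G v)) = floor(p/(G v)) because v does not divide p. *)
  have -> : p %/ G %/ v = (p - 1) %/ G %/ v.
    rewrite -!divnMA -[in LHS](subnK p_gt0) addn1 divnS ?muln_gt0 ?G_gt0 //.
    by rewrite subn1 prednK // (negbTE (contra (dvdn_trans (dvdn_mull G (dvdnn v))) ndvd_vp)).
  case/andP: (residue_bounds (maxn lo 1) ((p - 1) %/ G)) => + _; move/leq_trans; apply.
  apply: leq_trans (leq_sum_nat_subinterval _ (leq_maxl lo 1) len_ge).
  rewrite big_nat_cond [X in _ <= X]big_nat_cond; apply: leq_sum => y.
  by rewrite andbT => /andP[le_sy _]; rewrite -lt0n (leq_trans (leq_maxr lo 1) le_sy).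
apply: (@leq_trans (\sum_(lo <= y < hi) (y %% v == r))).
  by apply: leq_sum => y _; case: (y != 0).
apply: leq_trans (leq_sum_nat_subinterval _ (leqnn lo) len_le) _.
case/andP: (residue_bounds lo (p %/ G + 1)) => _ /leq_trans; apply.
by rewrite /ceil_div addnAC addnK divnDr // divnn v_gt0.
Qed.

Lemma expn_mod_inj p g x1 x2 : primitive_root_mod p g ->
  x1 < p - 1 -> x2 < p - 1 -> g ^ x1 = g ^ x2 %[mod p] -> x1 = x2.
Proof.
case=> co_gp [_ prim].
wlog le_21 : x1 x2 / x2 <= x1.
  move=> W lt1 lt2 eq12; case: (leqP x2 x1) => [le21 | /ltnW le12]; first exact: W.
  exact/esym/W.
move=> lt1 _ /eqP eq12.
have p_gt1 : 1 < p by case: p lt1 {prim co_gp eq12} => [|[]].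
have : g ^ (x1 - x2) == 1 %[mod p].
  by rewrite -(eqn_modMl_coprime _ _ (coprimeXl x2 co_gp)) muln1 -expnD subnKC.
rewrite (modn_small p_gt1) => /eqP pow_one.
have [/eqP | pos] := posnP (x1 - x2).
  by rewrite subn_eq0 => le12; apply/eqP; rewrite eqn_leq le12.
have := prim (x1 - x2); rewrite pos pow_one eqxx (leq_ltn_trans (leq_subr _ _) lt1).
by move/(_ isT).
Qed.

Lemma expn_mod_perm p g : prime p -> primitive_root_mod p g ->
  perm_eq [seq g ^ x %% p | x <- iota 0 (p - 1)] [seq y <- iota 0 p | y != 0].
Proof.
move=> p_prime prim; have p_gt0 := prime_gt0 p_prime.
have co_pg : coprime p g by rewrite coprime_sym; case: prim.
have uniq_pow : uniq [seq g ^ x %% p | x <- iota 0 (p - 1)].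
  rewrite map_inj_in_uniq ?iota_uniq // => x1 x2; rewrite !mem_iota !add0n => lt1 lt2.
  exact: expn_mod_inj prim lt1 lt2.
have sub_pow : {subset [seq g ^ x %% p | x <- iota 0 (p - 1)] <= [seq y <- iota 0 p | y != 0]}.
  move=> _ /mapP[x _ ->]; rewrite mem_filter mem_iota ltn_pmod // andbT.
  by have := coprimeXr x co_pg; rewrite prime_coprime // /dvdn => ->.
apply: uniq_perm => //; first by rewrite filter_uniq ?iota_uniq.
apply: (uniq_min_size uniq_pow sub_pow _).2.
rewrite size_map size_iota size_filter.
case: p p_gt0 {prim co_pg uniq_pow sub_pow p_prime} => // p _.
by rewrite /= add0n subn1 /=; apply: leq_trans (count_size _ _) _; rewrite size_iota.
Qed.

Lemma lambda_as_sum p v g t (z : 'I_t -> 'I_v) : prime p -> primitive_root_mod p g ->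
  lambda p v g t z
    = \sum_(0 <= y < p) ((y != 0) && [forall i : 'I_t, g ^ i * y %% p %% v == z i]).
Proof.
move=> p_prime prim; set P := fun y => [forall i : 'I_t, g ^ i * y %% p %% v == z i].
have -> : lambda p v g t z = \sum_(0 <= x < p - 1) P (g ^ x %% p).
  rewrite /lambda -sum1_card big_mkcond big_mkord; apply: eq_bigr => x _.
  by rewrite inE /P; congr (nat_of_bool _); apply: eq_forallb => i; rewrite modnMmr -expnD addnC.
rewrite /index_iota !subn0 -(big_map (fun x => g ^ x %% p) xpredT (fun y => P y : nat)).
rewrite (perm_big _ (expn_mod_perm p_prime prim)).
by rewrite big_filter big_mkcond; apply: eq_bigr => y _; case: (y != 0).
Qed.

Lemma forall_ord_iota n (P : pred nat) : [forall i : 'I_n, P i] = all P (iota 0 n).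
Proof.
apply/forallP/allP => [all_P i | all_P i]; last by apply: all_P; rewrite mem_iota /=.
by rewrite mem_iota add0n => /andP[_ lt_in]; apply: (all_P (Ordinal lt_in)).
Qed.

Lemma lambda_as_digit_sum p v g n (z : 'I_n.+1 -> 'I_v) (zz : nat -> nat) :
  prime p -> primitive_root_mod p g -> 0 < g ->
  (forall i : 'I_n.+1, zz i = z i) -> (forall i, zz i < v) ->
  lambda p v g n.+1 z
    = \sum_(0 <= K < g ^ n) digitwise g n (fun j => carry_ok p v g zz (n.-1 - j)) K
        * \sum_(ceil_div (K * p) (g ^ n) <= y < ceil_div (K.+1 * p) (g ^ n))
            ((y != 0) && (y %% v == zz 0)).
Proof.
move=> p_prime prim g_gt0 zzE zz_lt.
have p_gt0 := prime_gt0 p_prime; have G_gt0 : 0 < g ^ n by rewrite expn_gt0 g_gt0.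
pose lo K := ceil_div (K * p) (g ^ n).
have lo0 : lo 0 = 0 by rewrite /lo /ceil_div add0n divn_small // subn1 ltn_predL.
have loG : lo (g ^ n) = p.
  by rewrite /lo /ceil_div mulnC -addnBA // divnMDl // divn_small ?addn0 // subn1 ltn_predL.
have lo_mono k : lo k <= lo k.+1.
  by apply: leq_div2r; rewrite leq_sub2r // leq_add2r leq_mul2r leqnSn orbT.
rewrite lambda_as_sum // -[X in \sum_(0 <= y < X) _]loG (sum_nat_intervals _ _ lo0 lo_mono).
apply: eq_big_nat => K /andP[_ lt_KG]; rewrite big_distrr /=; apply: eq_big_nat => y.
rewrite ceil_div_interval // => /eqP K_eq.
have lt_yp : y < p by rewrite -(ltn_pmul2l G_gt0) -ltn_divLR // K_eq.
have -> : [forall i : 'I_n.+1, g ^ i * y %% p %% v == z i]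
    = [forall i : 'I_n.+1, g ^ i * y %% p %% v == zz i].
  by apply: eq_forallb => i; rewrite zzE.
rewrite (forall_ord_iota _ (fun i => g ^ i * y %% p %% v == zz i)).
rewrite orbit_residues_digitwise // K_eq.
by case: digitwise; rewrite ?andbT ?andbF ?mul1n ?mul0n.
Qed.

Theorem theorem8 (p v g t : nat)
  (Hp : prime p) (Hodd : odd p)
  (Hv1 : 1 < v) (Hv2 : v < p - 1)
  (Hg1 : 2 <= g) (Hg2 : g <= p - 1) (Hprim : primitive_root_mod p g)
  (Ht : 1 <= t) :
  let q := p %/ g ^ (t - 1) in
  forall z : 'I_t -> 'I_v,
    (g %/ v) ^ (t - 1) * (q %/ v) <= lambda p v g t z /\
    lambda p v g t z <= (ceil_div g v) ^ (t - 1) * (q %/ v + 1).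
Proof.
case: t Ht => [//|n] _ q z; subst q; rewrite subSS subn0.
have g_gt0 : 0 < g by apply: leq_trans Hg1.
have v_gt0 : 0 < v by apply: ltnW.
have co_pv : coprime p v by rewrite prime_coprime // gtnNdvd //; lia.
have ndvd_vp : ~~ (v %| p) by apply/negP => /(primeP Hp).2 /orP[] /eqP v_eq; lia.
pose zz i := oapp (fun j : 'I_n.+1 => val (z j)) 0 (insub i).
have zzE (i : 'I_n.+1) : zz i = z i by rewrite /zz valK.
have zz_lt i : zz i < v by rewrite /zz; case: insub => [j|] //=; apply: ltn_ord.
rewrite (lambda_as_digit_sum Hp Hprim g_gt0 zzE zz_lt); apply/andP.
apply: sum_digitwise_weighted_bounds => // [j | K _].
  have := sum_affine_residue_bounds (zz (n.-1 - j).+1) 0 g co_pv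
    (ltn_pmod (g * zz (n.-1 - j)) v_gt0).
  by rewrite add0n; under eq_bigr do rewrite modn_mod.
by apply: sum_nonzero_residue_interval (zz_lt 0) ndvd_vp; rewrite expn_gt0 g_gt0.
Qed.
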